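(* Let $\mathcal K$ be a finitely complete 2-category with a good yoneda structure. Let $C$ be small, $i:M\to\mathcal PC$ and $f:C\to A$ with $M$ and $f$ admissible. Then the colimit of $f$ weighted by $i$ exists iff there is an admissible 1-cell $\mathrm{col}(i,f):M\to A$ together with an isomorphism $A(\mathrm{col}(i,f),1)\cong\mathcal PC(i,A(f,1))$.
   Context: Given $f:A\to C$, $g:A\to B$, $h:B\to C$, a 2-cell $\phi:f\Rightarrow hg$ exhibits $g$ as a left lifting of $f$ along (through) $h$ if for every $k:A\to B$, $\kappa\mapsto(h\kappa)\cdot\phi$ is a bijection from 2-cells $g\Rightarrow k$ to 2-cells $f\Rightarrow hk$; it is absolute if $\phi j$ exhibits $gj$ as a left lifting of $fj$ along $h$ for all $j:D\to A$; $\phi$ exhibits $h$ as a left extension of $f$ along $g$ if for every $k:B\to C$, $\kappa\mapsto(\kappa g)\cdot\phi$ is a bijection from 2-cells $h\Rightarrow k$ to 2-cells $f\Rightarrow kg$; it is pointwise if for every $c:X\to B$, with lax pullback $p:g/c\to A$, $q:g/c\to X$, $\lambda:gp\Rightarrow cq$, $(h\lambda)\cdot(\phi p)$ exhibits $hc$ as a left extension of $fp$ along $q$. A good yoneda structure on a finitely complete 2-category: a class of admissible 1-cells with $fg$ admissible whenever $f$ is; an object $A$ is admissible when $1_A$ is; for admissible $A$ an object $\mathcal PA$ and admissible $y_A:A\to\mathcal PA$; for $f:A\to B$ with $A$, $f$ admissible a 1-cell $B(f,1):B\to\mathcal PA$ and 2-cell $\chi^f:y_A\Rightarrow B(f,1)f$;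 such that (i) $\chi^f$ exhibits $f$ as an absolute left lifting of $y_A$ through $B(f,1)$; (ii) if $A$, $f:A\to B$ admissible and $\psi:y_A\Rightarrow kf$ exhibits $f$ as an absolute left lifting of $y_A$ along $k$, then $\psi$ exhibits $k$ as a pointwise left extension of $y_A$ along $f$. $C$ is small if $C$ and $\mathcal PC$ are admissible. Notation: $B(f,x)$ means $B(f,1)x$; thus for admissible $i:M\to\mathcal PC$ (admissible here since $\mathcal PC$ is admissible), $\mathcal PC(i,A(f,1))=\mathcal PC(i,1)A(f,1):A\to\mathcal PM$. For $C$ small, $i:M\to\mathcal PC$, $f:C\to A$ with $M$, $f$ admissible, a colimit of $f$ weighted by $i$ is an admissible $\mathrm{col}(i,f):M\to A$ with a 2-cell $\eta:i\Rightarrow A(f,1)\mathrm{col}(i,f)$ exhibiting $\mathrm{col}(i,f)$ as an absolute left lifting of $i$ through $A(f,1)$. *)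

From Corelib Require Import ssreflect ssrfun ssrbool.

Record pre2cat := Pre2Cat {
  ob : Type;
  hom : ob -> ob -> Type;
  cell : forall A B : ob, hom A B -> hom A B -> Type;
  id1 : forall A : ob, hom A A;
  comp1 : forall A B C : ob, hom B C -> hom A B -> hom A C;
  id2 : forall (A B : ob) (f : hom A B), cell A B f f;
  vcomp : forall (A B : ob) (f g h : hom A B),
      cell A B g h -> cell A B f g -> cell A B f h;
  hcomp : forall (A B C : ob) (g g' : hom B C) (f f' : hom A B),
      cell B C g g' -> cell A B f f' ->
      cell A C (comp1 A B C g f) (comp1 A B C g' f')
}.

Arguments hom {p} _ _.
Arguments cell {p A B} _ _.
Arguments id1 {p} _.
Arguments comp1 {p A B C} _ _.
Arguments id2 {p A B} _.
Arguments vcomp {p A B f g h} _ _.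
Arguments hcomp {p A B C g g' f f'} _ _.

Definition cast2 {K : pre2cat} {A B : ob K} {f f' g g' : hom A B}
  (ef : f = f') (eg : g = g') (a : cell f g) : cell f' g' :=
  match ef in _ = x, eg in _ = y return cell x y with
  | eq_refl, eq_refl => a end.

Record is2cat (K : pre2cat) : Prop := {
  comp1A : forall (A B C D : ob K) (h : hom C D) (g : hom B C) (f : hom A B),
      comp1 h (comp1 g f) = comp1 (comp1 h g) f;
  comp1_idl : forall (A B : ob K) (f : hom A B), comp1 (id1 B) f = f;
  comp1_idr : forall (A B : ob K) (f : hom A B), comp1 f (id1 A) = f;
  vcompA : forall (A B : ob K) (f g h k : hom A B)
      (c : cell h k) (b : cell g h) (a : cell f g),
      vcomp c (vcomp b a) = vcomp (vcomp c b) a;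
  vcomp_idl : forall (A B : ob K) (f g : hom A B) (a : cell f g),
      vcomp (id2 g) a = a;
  vcomp_idr : forall (A B : ob K) (f g : hom A B) (a : cell f g),
      vcomp a (id2 f) = a;
  hcomp_id : forall (A B C : ob K) (g : hom B C) (f : hom A B),
      hcomp (id2 g) (id2 f) = id2 (comp1 g f);
  interchange : forall (A B C : ob K) (g g' g'' : hom B C) (f f' f'' : hom A B)
      (b' : cell g' g'') (b : cell g g') (a' : cell f' f'') (a : cell f f'),
      hcomp (vcomp b' b) (vcomp a' a) = vcomp (hcomp b' a') (hcomp b a);
  hcompA : forall (A B C D : ob K) (h h' : hom C D) (g g' : hom B C)
      (f f' : hom A B) (c : cell h h') (b : cell g g') (a : cell f f'),
      hcomp c (hcomp b a) =
      cast2 (esym (comp1A A B C D h g f)) (esym (comp1A A B C D h' g' f'))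
            (hcomp (hcomp c b) a);
  hcomp_idl : forall (A B : ob K) (f f' : hom A B) (a : cell f f'),
      hcomp (id2 (id1 B)) a =
      cast2 (esym (comp1_idl A B f)) (esym (comp1_idl A B f')) a;
  hcomp_idr : forall (A B : ob K) (f f' : hom A B) (a : cell f f'),
      hcomp a (id2 (id1 A)) =
      cast2 (esym (comp1_idr A B f)) (esym (comp1_idr A B f')) a
}.

Record twocat := TwoCat { tc :> pre2cat; tc_laws : is2cat tc }.

Section TwoCatDefs.
Context {K : twocat}.

Definition assoc {A B C D : ob K} (h : hom C D) (g : hom B C) (f : hom A B) :
  comp1 h (comp1 g f) = comp1 (comp1 h g) f :=
  comp1A _ (tc_laws K) A B C D h g f.

Definition wl {A B C : ob K} (h : hom B C) {f g : hom A B} (a : cell f g) :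
  cell (comp1 h f) (comp1 h g) := hcomp (id2 h) a.
Definition wr {A B C : ob K} {g h : hom B C} (a : cell g h) (f : hom A B) :
  cell (comp1 g f) (comp1 h f) := hcomp a (id2 f).

Definition iso1 {A B : ob K} (f g : hom A B) : Prop :=
  exists (a : cell f g) (b : cell g f), vcomp b a = id2 f /\ vcomp a b = id2 g.

Definition left_lifting {A B C : ob K} (f : hom A C) (g : hom A B) (h : hom B C)
  (phi : cell f (comp1 h g)) : Prop :=
  forall k : hom A B,
    bijective (fun kappa : cell g k => vcomp (wl h kappa) phi).

Definition abs_left_lifting {A B C : ob K} (f : hom A C) (g : hom A B)
  (h : hom B C) (phi : cell f (comp1 h g)) : Prop :=
  forall (D : ob K) (j : hom D A),
    left_lifting (comp1 f j) (comp1 g j) h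
      (cast2 erefl (esym (assoc h g j)) (wr phi j)).

Definition left_extension {A B C : ob K} (f : hom A C) (g : hom A B)
  (h : hom B C) (phi : cell f (comp1 h g)) : Prop :=
  forall k : hom B C,
    bijective (fun kappa : cell h k => vcomp (wr kappa g) phi).

Definition is_comma {A B X : ob K} (g : hom A B) (c : hom X B) (P : ob K)
  (p : hom P A) (q : hom P X) (lam : cell (comp1 g p) (comp1 c q)) : Prop :=
  (forall (Y : ob K) (p' : hom Y A) (q' : hom Y X)
          (lam' : cell (comp1 g p') (comp1 c q')),
     exists! u : hom Y P,
       exists (ep : comp1 p u = p') (eq : comp1 q u = q'),
         cast2 (eq_trans (esym (assoc g p u)) (f_equal (comp1 g) ep))
               (eq_trans (esym (assoc c q u)) (f_equal (comp1 c) eq))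
               (wr lam u) = lam')
  /\
  (forall (Y : ob K) (u v : hom Y P)
          (al : cell (comp1 p u) (comp1 p v)) (be : cell (comp1 q u) (comp1 q v)),
     vcomp (wl c be)
           (cast2 (esym (assoc g p u)) (esym (assoc c q u)) (wr lam u))
     = vcomp (cast2 (esym (assoc g p v)) (esym (assoc c q v)) (wr lam v))
             (wl g al) ->
     exists! ga : cell u v, wl p ga = al /\ wl q ga = be).

Definition is_pullback {A B C : ob K} (g : hom A B) (h : hom C B) (P : ob K)
  (p : hom P A) (q : hom P C) : Prop :=
  exists e : comp1 g p = comp1 h q,
  (forall (Y : ob K) (p' : hom Y A) (q' : hom Y C),
     comp1 g p' = comp1 h q' ->
     exists! u : hom Y P, comp1 p u = p' /\ comp1 q u = q')
  /\
  (forall (Y : ob K) (u v : hom Y P)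
          (al : cell (comp1 p u) (comp1 p v)) (be : cell (comp1 q u) (comp1 q v)),
     wl g al =
     cast2 (eq_trans (assoc h q u)
             (eq_trans (f_equal (fun x => comp1 x u) (esym e)) (esym (assoc g p u))))
           (eq_trans (assoc h q v)
             (eq_trans (f_equal (fun x => comp1 x v) (esym e)) (esym (assoc g p v))))
           (wl h be) ->
     exists! ga : cell u v, wl p ga = al /\ wl q ga = be).

Definition is_terminal (T : ob K) : Prop :=
  (forall X : ob K, exists t : hom X T, forall t' : hom X T, t' = t) /\
  (forall (X : ob K) (t : hom X T) (a : cell t t), a = id2 t).

(* finite completeness: terminal object, pullbacks and comma objects
   (equivalently, finite products, equalizers and cotensors with 2) *)
Definition finitely_complete : Prop :=
  (exists T : ob K, is_terminal T) /\
  (forall (A B C : ob K) (g : hom A B) (h : hom C B),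
     exists (P : ob K) (p : hom P A) (q : hom P C), is_pullback g h P p q) /\
  (forall (A B X : ob K) (g : hom A B) (c : hom X B),
     exists (P : ob K) (p : hom P A) (q : hom P X)
            (lam : cell (comp1 g p) (comp1 c q)), is_comma g c P p q lam).

Definition pw_left_extension {A B C : ob K} (f : hom A C) (g : hom A B)
  (h : hom B C) (phi : cell f (comp1 h g)) : Prop :=
  forall (X : ob K) (c : hom X B) (P : ob K) (p : hom P A) (q : hom P X)
         (lam : cell (comp1 g p) (comp1 c q)),
    is_comma g c P p q lam ->
    left_extension (comp1 f p) q (comp1 h c)
      (cast2 erefl (assoc h c q)
         (vcomp (wl h lam) (cast2 erefl (esym (assoc h g p)) (wr phi p)))).

End TwoCatDefs.

Record good_yoneda (K : twocat) := GoodYoneda {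
  adm : forall A B : ob K, hom A B -> Prop;
  adm_comp : forall (A B C : ob K) (f : hom B C) (g : hom A B),
      adm B C f -> adm A C (comp1 f g);
  (* PSh A and yon A are only meaningful for admissible A *)
  PSh : ob K -> ob K;
  yon : forall A : ob K, hom A (PSh A);
  yon_adm : forall A : ob K, adm A A (id1 A) -> adm A (PSh A) (yon A);
  (* rep hA hf = B(f,1) : B -> P A, defined for A and f admissible *)
  rep : forall (A B : ob K) (f : hom A B),
      adm A A (id1 A) -> adm A B f -> hom B (PSh A);
  chi : forall (A B : ob K) (f : hom A B) (hA : adm A A (id1 A)) (hf : adm A B f),
      cell (yon A) (comp1 (rep A B f hA hf) f);
  yoneda_i : forall (A B : ob K) (f : hom A B) (hA : adm A A (id1 A)) (hf : adm A B f),
      abs_left_lifting (yon A) f (rep A B f hA hf) (chi A B f hA hf);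
  yoneda_ii : forall (A B : ob K) (f : hom A B) (k : hom B (PSh A))
      (psi : cell (yon A) (comp1 k f)),
      adm A A (id1 A) -> adm A B f ->
      abs_left_lifting (yon A) f k psi ->
      pw_left_extension (yon A) f k psi
}.

Arguments adm {K} _ {A B} _.
Arguments PSh {K} _ _.
Arguments yon {K} _ _.
Arguments rep {K} _ {A B f} _ _.
Arguments chi {K} _ {A B f} _ _.

Lemma adm_into {K : twocat} (Y : good_yoneda K) {A B : ob K}
  (hB : adm Y (id1 B)) (f : hom A B) : adm Y f.
Proof.
  rewrite -(comp1_idl _ (tc_laws K) A B f). by apply: adm_comp.
Qed.

Definition is_weighted_colimit {K : twocat} (Y : good_yoneda K) {C M A : ob K}
  (hC : adm Y (id1 C)) (i : hom M (PSh Y C)) (f : hom C A) (hf : adm Y f)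
  (col : hom M A) (eta : cell i (comp1 (rep Y hC hf) col)) : Prop :=
  adm Y col /\ abs_left_lifting i col (rep Y hC hf) eta.

(** Compose the yoneda lifting [chi^i : y_M => PC(i,1) i] with a
    2-cell [eta : i => A(f,1) col]. Since [chi^i] is an absolute left lifting,
    [eta] is an absolute left lifting exactly when the pasted 2-cell
    [y_M => PC(i,1) A(f,1) col] is one. If it is, axiom (ii) makes both it and
    [chi^col] pointwise left extensions of [y_M] along [col]; pointwise left
    extensions are left extensions (evaluate at the comma object [col/1_A]), and
    left extensions are unique up to isomorphism, whence
    [A(col,1) ~= PC(i,1) A(f,1)]. Conversely such an isomorphism turns [chi^col]
    into an absolute left lifting through [PC(i,1) A(f,1)], which factors
    through [chi^i] as an absolute left lifting [eta] of [i] through [A(f,1)]. *)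
From Pilot Require Import Defs.
From Corelib Require Import ssreflect ssrfun ssrbool.
From Stdlib Require Import JMeq.

Notation "x ~= y" := (JMeq x y) (at level 70, no associativity).

Lemma bij_of_comp {X Y Z : Type} (e : X -> Y) (r : Y -> Z) :
  injective r -> bijective (r \o e) -> bijective e.
Proof.
move=> r_inj [g gK Kg]; exists (g \o r) => [x | y]; first exact: gK.
by apply: r_inj; exact: Kg (r y).
Qed.

Section Whiskering.
Context {K : twocat}.

Lemma comp1_id1l {A B : ob K} (f : hom A B) : comp1 (id1 B) f = f.
Proof. exact: comp1_idl _ (tc_laws K) _ _ f. Qed.

Lemma comp1_id1r {A B : ob K} (f : hom A B) : comp1 f (id1 A) = f.
Proof. exact: comp1_idr _ (tc_laws K) _ _ f. Qed.

Lemma vcomp_assoc {A B : ob K} {f g h k : hom A B}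
  (c : cell h k) (b : cell g h) (a : cell f g) :
  vcomp c (vcomp b a) = vcomp (vcomp c b) a.
Proof. exact: vcompA _ (tc_laws K) _ _ _ _ _ _ c b a. Qed.

Lemma vcomp_id2l {A B : ob K} {f g : hom A B} (a : cell f g) :
  vcomp (id2 g) a = a.
Proof. exact: vcomp_idl _ (tc_laws K) _ _ _ _ a. Qed.

Lemma cast2_JMeq {A B : ob K} {f f' g g' : hom A B} (e1 : f = f') (e2 : g = g')
  (a : cell f g) : cast2 e1 e2 a ~= a.
Proof. by case: f' / e1; case: g' / e2. Qed.

Lemma cast2_bij {A B : ob K} {f f' g g' : hom A B} (e1 : f = f') (e2 : g = g') :
  bijective (@cast2 K A B f f' g g' e1 e2).
Proof. by case: f' / e1; case: g' / e2; exists id. Qed.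

Lemma vcomp_JMeq {A B : ob K} {f g h f' g' h' : hom A B}
  (b : cell g h) (a : cell f g) (b' : cell g' h') (a' : cell f' g') :
  f = f' -> g = g' -> h = h' -> b ~= b' -> a ~= a' -> vcomp b a ~= vcomp b' a'.
Proof. by move=> ef eg eh; subst=> eb ea; rewrite (JMeq_eq eb) (JMeq_eq ea). Qed.

Lemma wl_JMeq {A B C : ob K} {h h' : hom B C} {f g f' g' : hom A B}
  (a : cell f g) (a' : cell f' g') :
  h = h' -> f = f' -> g = g' -> a ~= a' -> wl h a ~= wl h' a'.
Proof. by move=> e1 e2 e3; subst=> ea; rewrite (JMeq_eq ea). Qed.

Lemma wr_JMeq {A B C : ob K} {g h g' h' : hom B C} {f f' : hom A B}
  (a : cell g h) (a' : cell g' h') :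
  f = f' -> g = g' -> h = h' -> a ~= a' -> wr a f ~= wr a' f'.
Proof. by move=> e1 e2 e3; subst=> ea; rewrite (JMeq_eq ea). Qed.

Lemma wl_comp1 {A B C D : ob K} (h : hom C D) (g : hom B C) {f f' : hom A B}
  (a : cell f f') : wl h (wl g a) ~= wl (comp1 h g) a.
Proof.
rewrite /wl (hcompA _ (tc_laws K)) (hcomp_id _ (tc_laws K)); exact: cast2_JMeq.
Qed.

Lemma wr_comp1 {A B C D : ob K} {h h' : hom C D} (a : cell h h') (g : hom B C)
  (f : hom A B) : wr (wr a g) f ~= wr a (comp1 g f).
Proof.
rewrite /wr; have := hcompA _ (tc_laws K) _ _ _ _ _ _ _ _ _ _ a (id2 g) (id2 f).
rewrite (hcomp_id _ (tc_laws K)) => ->; apply: JMeq_sym; exact: cast2_JMeq.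
Qed.

Lemma wr_wl {A B C D : ob K} (h : hom C D) {g g' : hom B C} (a : cell g g')
  (f : hom A B) : wr (wl h a) f ~= wl h (wr a f).
Proof. rewrite /wr /wl (hcompA _ (tc_laws K)); apply: JMeq_sym; exact: cast2_JMeq. Qed.

Lemma wr_id1 {A B : ob K} {f f' : hom A B} (a : cell f f') : wr a (id1 A) ~= a.
Proof. rewrite /wr (hcomp_idr _ (tc_laws K)); exact: cast2_JMeq. Qed.

Lemma wl_vcomp {A B C : ob K} (h : hom B C) {f g k : hom A B}
  (b : cell g k) (a : cell f g) : wl h (vcomp b a) = vcomp (wl h b) (wl h a).
Proof. by rewrite /wl -(Defs.interchange _ (tc_laws K)) vcomp_id2l. Qed.

Lemma wr_vcomp {A B C : ob K} {f g k : hom B C} (b : cell g k) (a : cell f g)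
  (h : hom A B) : wr (vcomp b a) h = vcomp (wr b h) (wr a h).
Proof. by rewrite /wr -(Defs.interchange _ (tc_laws K)) vcomp_id2l. Qed.

Lemma wl_id2 {A B C : ob K} (h : hom B C) (g : hom A B) :
  wl h (id2 g) = id2 (comp1 h g).
Proof. exact: hcomp_id _ (tc_laws K) _ _ _ h g. Qed.

Lemma wr_id2 {A B C : ob K} (h : hom B C) (g : hom A B) :
  wr (id2 h) g = id2 (comp1 h g).
Proof. exact: hcomp_id _ (tc_laws K) _ _ _ h g. Qed.

Lemma whisker_exchange {A B C : ob K} {h k : hom B C} {g g' : hom A B}
  (ka : cell h k) (al : cell g g') :
  vcomp (wr ka g') (wl h al) = vcomp (wl k al) (wr ka g).
Proof.
rewrite /wr /wl -!(Defs.interchange _ (tc_laws K)) !vcomp_id2l.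
by rewrite !(vcomp_idr _ (tc_laws K)).
Qed.

End Whiskering.

Section Liftings.
Context {K : twocat}.

(* [abs_left_lifting f g h phi] unfolds to the bijectivity of every
   [lifting_map phi j k]. *)
Definition lifting_map {A B C D : ob K} {f : hom A C} {g : hom A B} {h : hom B C}
  (phi : cell f (comp1 h g)) (j : hom D A) (k : hom D B)
  (kappa : cell (comp1 g j) k) : cell (comp1 f j) (comp1 h k) :=
  vcomp (wl h kappa) (cast2 erefl (esym (assoc h g j)) (wr phi j)).

Lemma abs_left_lifting_left_lifting {A B C : ob K} {f : hom A C} {g : hom A B}
  {h : hom B C} (phi : cell f (comp1 h g)) :
  abs_left_lifting f g h phi -> left_lifting f g h phi.
Proof.
move=> phi_abs k.
apply: (eq_bij (bij_comp (cast2_bij (comp1_id1r f) erefl)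
  (bij_comp (phi_abs A (id1 A) k) (cast2_bij (esym (comp1_id1r g)) erefl)))).
move=> kappa; apply: JMeq_eq; apply: JMeq_trans; first exact: cast2_JMeq.
apply: vcomp_JMeq; rewrite ?comp1_id1r //.
- apply: wl_JMeq; rewrite ?comp1_id1r //; exact: cast2_JMeq.
- apply: JMeq_trans; [exact: cast2_JMeq | exact: wr_id1].
Qed.

Lemma abs_left_lifting_iso {A B C : ob K} {f : hom A C} {g : hom A B}
  {k k' : hom B C} (psi : cell f (comp1 k g)) (s : cell k k') (s' : cell k' k) :
  vcomp s' s = id2 k -> vcomp s s' = id2 k' ->
  abs_left_lifting f g k psi -> abs_left_lifting f g k' (vcomp (wr s g) psi).
Proof.
move=> ss' s's psi_abs D j m.
have s_bij : bijective (@vcomp _ _ _ (comp1 f j) _ _ (wr s m)).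
  by exists (vcomp (wr s' m)) => x;
    rewrite vcomp_assoc -wr_vcomp ?ss' ?s's wr_id2 vcomp_id2l.
apply: (eq_bij (bij_comp s_bij (psi_abs D j m))) => kappa; symmetry.
rewrite /comp /lifting_map vcomp_assoc whisker_exchange -vcomp_assoc; congr (vcomp _ _).
apply: JMeq_eq; apply: JMeq_trans; first exact: cast2_JMeq.
rewrite wr_vcomp; apply: vcomp_JMeq; rewrite -?assoc //.
- exact: wr_comp1.
- apply: JMeq_sym; exact: cast2_JMeq.
Qed.

Lemma left_extension_iso {A B C : ob K} {f : hom A C} {g : hom A B}
  {h h' : hom B C} (phi : cell f (comp1 h g)) (phi' : cell f (comp1 h' g)) :
  left_extension f g h phi -> left_extension f g h' phi' -> iso1 h h'.
Proof.
move=> ext ext'; case: (ext h') => F _ FK; case: (ext' h) => F' _ F'K.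
exists (F phi'), (F' phi); split.
- apply: (bij_inj (ext h)).
  by rewrite wr_vcomp -vcomp_assoc FK F'K wr_id2 vcomp_id2l.
- apply: (bij_inj (ext' h')).
  by rewrite wr_vcomp -vcomp_assoc F'K FK wr_id2 vcomp_id2l.
Qed.

End Liftings.

Section Pasting.
Context {K : twocat} {M X Z W : ob K} {y : hom M X} {i : hom M Z} {P : hom Z X}
  {Q : hom W Z} {c : hom M W} (chi : cell y (comp1 P i)).

Definition paste (eta : cell i (comp1 Q c)) : cell y (comp1 (comp1 P Q) c) :=
  cast2 erefl (assoc P Q c) (vcomp (wl P eta) chi).

Lemma lifting_map_paste (eta : cell i (comp1 Q c)) {D : ob K} (j : hom D M)
  (m : hom D W) (kappa : cell (comp1 c j) m) :
  lifting_map (paste eta) j m kappa =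
  cast2 erefl (assoc P Q m) (lifting_map chi j (comp1 Q m) (lifting_map eta j m kappa)).
Proof.
apply: JMeq_eq; apply: JMeq_sym; apply: JMeq_trans; first exact: cast2_JMeq.
rewrite /lifting_map wl_vcomp -vcomp_assoc.
apply: vcomp_JMeq; rewrite ?assoc //; first exact: wl_comp1.
apply: JMeq_sym; apply: JMeq_trans; first exact: cast2_JMeq.
apply: (JMeq_trans (y := wr (vcomp (wl P eta) chi) j)).
  apply: wr_JMeq; rewrite ?assoc //; exact: cast2_JMeq.
rewrite wr_vcomp; apply: vcomp_JMeq; rewrite ?assoc //.
- apply: JMeq_trans; first exact: wr_wl.
  apply: wl_JMeq; rewrite ?assoc //; apply: JMeq_sym; exact: cast2_JMeq.
- apply: JMeq_sym; exact: cast2_JMeq.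
Qed.

Lemma abs_left_lifting_paste (eta : cell i (comp1 Q c)) :
  abs_left_lifting y i P chi -> abs_left_lifting i c Q eta ->
  abs_left_lifting y c (comp1 P Q) (paste eta).
Proof.
move=> chi_abs eta_abs D j m.
apply: (eq_bij (bij_comp (cast2_bij erefl (assoc P Q m))
  (bij_comp (chi_abs D j (comp1 Q m)) (eta_abs D j m)))).
by move=> kappa; rewrite -[RHS]/(lifting_map (paste eta) j m kappa) lifting_map_paste.
Qed.

Lemma abs_left_lifting_paste_cancel (eta : cell i (comp1 Q c)) :
  abs_left_lifting y i P chi -> abs_left_lifting y c (comp1 P Q) (paste eta) ->
  abs_left_lifting i c Q eta.
Proof.
move=> chi_abs paste_abs D j m.
apply: (bij_of_comp _ (cast2 erefl (assoc P Q m) \o lifting_map chi j (comp1 Q m))).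
  apply: bij_inj; apply: bij_comp; [exact: cast2_bij | exact: chi_abs].
apply: (eq_bij (paste_abs D j m)) => kappa.
by rewrite -[LHS]/(lifting_map (paste eta) j m kappa) lifting_map_paste.
Qed.

Lemma abs_left_lifting_factor (theta : cell y (comp1 (comp1 P Q) c)) :
  abs_left_lifting y i P chi -> abs_left_lifting y c (comp1 P Q) theta ->
  exists2 eta : cell i (comp1 Q c), paste eta = theta & abs_left_lifting i c Q eta.
Proof.
move=> chi_abs theta_abs.
case: (abs_left_lifting_left_lifting _ chi_abs (comp1 Q c)) => G _ GK.
have paste_G : paste (G (cast2 erefl (esym (assoc P Q c)) theta)) = theta.
  apply: JMeq_eq; rewrite /paste GK.
  apply: JMeq_trans; exact: cast2_JMeq.
exists (G (cast2 erefl (esym (assoc P Q c)) theta)) => //.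
by apply: (abs_left_lifting_paste_cancel _ chi_abs); rewrite paste_G.
Qed.

End Pasting.

Section CommaRestriction.
Context {K : twocat} {A B C : ob K} (f : hom A C) (g : hom A B) {P : ob K}
  (p : hom P A) (q : hom P B) (lam : cell (comp1 g p) (comp1 (id1 B) q)).

Lemma comma_id_section : is_comma g (id1 B) P p q lam ->
  exists s : hom A P, [/\ comp1 p s = id1 A, comp1 q s = g & wr lam s ~= id2 g].
Proof.
case=> univ _.
have [s [[ps [qs lam_s]] _]] :=
  univ A (id1 A) g (cast2 (esym (comp1_id1r g)) (esym (comp1_id1l g)) (id2 g)).
exists s; split=> //.
apply: JMeq_trans (cast2_JMeq (esym (comp1_id1r g)) (esym (comp1_id1l g)) _).
rewrite -lam_s; exact: JMeq_sym (cast2_JMeq _ _ _).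
Qed.

Definition comma_restrict (k : hom B C) (beta : cell f (comp1 k g)) :
  cell (comp1 f p) (comp1 k q) :=
  cast2 erefl (f_equal (comp1 k) (comp1_id1l q))
    (vcomp (wl k lam) (cast2 erefl (esym (assoc k g p)) (wr beta p))).

(* Restricting along the section [s] of [p] with [lam s = 1_g] undoes
   [comma_restrict]. *)
Lemma comma_restrict_inj (k : hom B C) : is_comma g (id1 B) P p q lam ->
  injective (comma_restrict k).
Proof.
case/comma_id_section=> s [ps qs lam_s].
have e1 : comp1 (comp1 f p) s = f by rewrite -assoc ps comp1_id1r.
have e2 : comp1 (comp1 k q) s = comp1 k g by rewrite -assoc qs.
apply: (can_inj (g := fun gam => cast2 e1 e2 (wr gam s))) => beta.
apply: JMeq_eq; apply: JMeq_trans; first exact: cast2_JMeq.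
apply: (JMeq_trans (y := wr (vcomp (wl k lam)
          (cast2 erefl (esym (assoc k g p)) (wr beta p))) s)).
  apply: wr_JMeq; rewrite ?comp1_id1l //; exact: cast2_JMeq.
rewrite wr_vcomp; apply: (JMeq_trans (y := vcomp (id2 (comp1 k g)) beta));
  last by rewrite vcomp_id2l.
apply: vcomp_JMeq; rewrite -?assoc ?ps ?qs ?comp1_id1r ?comp1_id1l //.
- apply: JMeq_trans; first exact: wr_wl.
  apply: (JMeq_trans (y := wl k (id2 g))); last by rewrite wl_id2.
  by apply: wl_JMeq; rewrite -?assoc ?ps ?qs ?comp1_id1r ?comp1_id1l.
- apply: (JMeq_trans (y := wr (wr beta p) s)).
    apply: wr_JMeq; rewrite ?assoc //; exact: cast2_JMeq.
  apply: JMeq_trans; first exact: wr_comp1.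
  by apply: JMeq_trans (wr_id1 beta); apply: wr_JMeq.
Qed.

Lemma comma_restrict_extension {h : hom B C} (phi : cell f (comp1 h g))
  (k : hom B C) (kappa : cell h k) :
  comma_restrict k (vcomp (wr kappa g) phi) =
  vcomp (wr (cast2 (esym (comp1_id1r h)) erefl kappa) q)
    (cast2 erefl (assoc h (id1 B) q)
       (vcomp (wl h lam) (cast2 erefl (esym (assoc h g p)) (wr phi p)))).
Proof.
apply: JMeq_eq; apply: JMeq_trans; first exact: cast2_JMeq.
have -> : cast2 erefl (esym (assoc k g p)) (wr (vcomp (wr kappa g) phi) p) =
          vcomp (wr kappa (comp1 g p)) (cast2 erefl (esym (assoc h g p)) (wr phi p)).
{ apply: JMeq_eq; apply: JMeq_trans; first exact: cast2_JMeq.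
  rewrite wr_vcomp; apply: vcomp_JMeq; rewrite -?assoc //.
  - exact: wr_comp1.
  - apply: JMeq_sym; exact: cast2_JMeq. }
rewrite vcomp_assoc -whisker_exchange -vcomp_assoc.
apply: vcomp_JMeq; rewrite ?assoc ?comp1_id1l ?comp1_id1r //.
- apply: wr_JMeq; rewrite ?comp1_id1r //; apply: JMeq_sym; exact: cast2_JMeq.
- apply: JMeq_sym; exact: cast2_JMeq.
Qed.

End CommaRestriction.

Lemma pw_left_extension_left_extension {K : twocat} {A B C : ob K} {f : hom A C}
  {g : hom A B} {h : hom B C} (phi : cell f (comp1 h g)) {P : ob K} {p : hom P A}
  {q : hom P B} {lam : cell (comp1 g p) (comp1 (id1 B) q)} :
  is_comma g (id1 B) P p q lam ->
  pw_left_extension f g h phi -> left_extension f g h phi.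
Proof.
move=> comma phi_pw k.
apply: (bij_of_comp _ _ (comma_restrict_inj f g p q lam k comma)).
apply: (eq_bij (bij_comp (phi_pw B (id1 B) P p q lam comma k)
  (cast2_bij (esym (comp1_id1r h)) erefl))).
by move=> kappa /=; rewrite comma_restrict_extension.
Qed.

Lemma abs_left_lifting_yon_iso {K : twocat} (Y : good_yoneda K)
  (HK : @finitely_complete K) {M A : ob K} (hM : adm Y (id1 M)) (col : hom M A)
  (hcol : adm Y col) (k : hom A (PSh Y M)) (psi : cell (yon Y M) (comp1 k col)) :
  abs_left_lifting (yon Y M) col k psi -> iso1 (rep Y hM hcol) k.
Proof.
move=> psi_abs; case: HK => _ [_ /(_ _ _ _ col (id1 A)) [P [p [q [lam comma]]]]].
have ext_of_abs k' (psi' : cell (yon Y M) (comp1 k' col)) :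
    abs_left_lifting (yon Y M) col k' psi' -> left_extension (yon Y M) col k' psi'.
  by move=> psi'_abs; exact: pw_left_extension_left_extension comma
    (yoneda_ii K Y M A col k' psi' hM hcol psi'_abs).
apply: (left_extension_iso _ _ (ext_of_abs _ _ (yoneda_i K Y M A col hM hcol))).
exact: ext_of_abs _ _ psi_abs.
Qed.

Theorem corollary3p11 (K : twocat) (Y : good_yoneda K)
  (HK : @finitely_complete K)
  (C M A : ob K)
  (hC : adm Y (id1 C)) (hPC : adm Y (id1 (PSh Y C)))   (* C small *)
  (i : hom M (PSh Y C)) (f : hom C A)
  (hM : adm Y (id1 M)) (hf : adm Y f) :
  (exists (col : hom M A) (eta : cell i (comp1 (rep Y hC hf) col)),
      is_weighted_colimit Y hC i f hf col eta)
  <->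
  (exists (col : hom M A) (hcol : adm Y col),
      iso1 (rep Y hM hcol) (comp1 (rep Y hM (adm_into Y hPC i)) (rep Y hC hf))).
Proof.
have chi_abs := yoneda_i K Y M (PSh Y C) i hM (adm_into Y hPC i).
split=> [[col [eta [hcol eta_abs]]] | [col [hcol [s [s' [s's ss']]]]]].
- exists col, hcol; apply: (abs_left_lifting_yon_iso Y HK).
  exact: abs_left_lifting_paste chi_abs eta_abs.
- have := abs_left_lifting_iso _ s s' s's ss' (yoneda_i K Y M A col hM hcol).
  case/(abs_left_lifting_factor _ _ chi_abs)=> eta _ eta_abs.
  by exists col, eta.
Qed.
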